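(* $\mathfrak{L}(\mathrm{rtDVA}(1))\subsetneq\bigcup_{k}\mathfrak{L}(\mathrm{rtD}k\mathrm{CA})$.
   Context: $\mathfrak{L}(A)$ denotes the class of languages recognized by machines of type $A$. A real-time deterministic vector automaton of dimension $k$ ($\mathrm{rtDVA}(k)$) is a 6-tuple $(Q,\Sigma,\delta,q_0,Q_a,v)$ with finite state set $Q$, initial state $q_0$, accept states $Q_a$, initial row vector $v\in\mathbb{Q}^k$ (freely chosen), and $\delta:Q\times(\Sigma\cup\{\cent,\$\})\times\{=,\neq\}\to Q\times S$, $S$ the set of $k\times k$ rational matrices. The input $w$ is read as $\cent w\$$ left to right, one symbol per step; in state $q$ reading $\sigma$, with $\omega$ equal to ''$=$'' iff the first vector entry equals $1$, if $\delta(q,\sigma,\omega)=(q',M)$ the machine goes to $q'$ and multiplies its row vector on the right by $M$. Acceptance: after processing $\$$, the state is in $Q_a$ and the first vector entry equals $1$. A real-time deterministic $k$-counter automaton (rtD$k$CA) is a 5-tuple $(Q,\Sigma,\delta,q_0,Q_a)$ with $k$ integer counters initially $0$, reading $\cent w\$$ one symbol per step; $\delta(q,\sigma,\theta)=(q',c)$ with $\theta\in\{0,\pm\}^k$ the zero/nonzero status of each counter and $c\in\{-1,0,1\}^k$ the counter increments; acceptance iff in an accept state after scanning $\$$. The union ranges over all $k\ge 1$. *)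

From HB Require Import structures.
From mathcomp Require Import all_boot all_order all_algebra.
Set Implicit Arguments. Unset Strict Implicit. Unset Printing Implicit Defensive.
Import GRing.Theory Num.Theory.
Local Open Scope ring_scope.

Inductive esym (S : Type) := ESym of S | ECent | EDollar.
Arguments ECent {S}. Arguments EDollar {S}.

Definition tape (S : Type) (w : seq S) : seq (esym S) :=
  ECent :: map (@ESym S) w ++ [:: EDollar].

(* [rtDVA S n] is an rtDVA of dimension k = n.+1 (dimension is >= 1 so the
   "first entry" of the vector exists); rtDVA(1) is [rtDVA S 0]. *)
Record rtDVA (S : finType) (n : nat) := RtDVA {
  dva_Q : finType;
  (* the bool argument is omega: true iff the first vector entry equals 1 *)
  dva_delta : dva_Q -> esym S -> bool -> dva_Q * 'M[rat]_n.+1;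
  dva_q0 : dva_Q;
  dva_acc : {set dva_Q};
  dva_v : 'rV[rat]_n.+1 }.

Definition dva_step S n (M : rtDVA S n) (c : dva_Q M * 'rV[rat]_n.+1)
  (a : esym S) : dva_Q M * 'rV[rat]_n.+1 :=
  let: (q, v) := c in
  let: (q', A) := @dva_delta S n M q a (v 0 0 == 1) in (q', v *m A).

Definition dva_accepts S n (M : rtDVA S n) (w : seq S) : bool :=
  let: (q, v) := foldl (@dva_step S n M) (@dva_q0 S n M, @dva_v S n M) (tape w) in
  (q \in @dva_acc S n M) && (v 0 0 == 1).

Inductive incr := IncM1 | Inc0 | IncP1.
Definition incr_val (d : incr) : int :=
  match d with IncM1 => -1 | Inc0 => 0 | IncP1 => 1 end.

Record rtDCA (S : finType) (k : nat) := RtDCA {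
  dca_Q : finType;
  (* the status argument theta: theta i = true iff counter i is zero *)
  dca_delta : dca_Q -> esym S -> {ffun 'I_k -> bool} -> dca_Q * {ffun 'I_k -> incr};
  dca_q0 : dca_Q;
  dca_acc : {set dca_Q} }.

Definition dca_step S k (N : rtDCA S k) (c : dca_Q N * {ffun 'I_k -> int})
  (a : esym S) : dca_Q N * {ffun 'I_k -> int} :=
  let: (q, ctr) := c in
  let: (q', d) := @dca_delta S k N q a [ffun i => ctr i == 0] in
  (q', [ffun i => ctr i + incr_val (d i)]).

Definition dca_accepts S k (N : rtDCA S k) (w : seq S) : bool :=
  (foldl (@dca_step S k N) (@dca_q0 S k N, [ffun => 0]) (tape w)).1 \in @dca_acc S k N.

From Pilot Require Import Defs.
From mathcomp Require Import all_boot all_order all_algebra.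
From mathcomp Require Import zify ring.
From Stdlib Require Import Classical.
Set Implicit Arguments. Unset Strict Implicit. Unset Printing Implicit Defensive.
Import Order.TTheory GRing.Theory Num.Theory.
Local Open Scope ring_scope.

(* Inclusion: the register of an rtDVA(1) is a rational x that only gets
   multiplied by the finitely many entries of its matrices, all of whose
   numerators and denominators are below some N. So x is determined by its
   sign and its p-adic valuations for the primes p < N, and x = 1 iff x > 0
   and all these valuations vanish. A counter automaton keeps each valuation
   in a counter (up to a bounded digit kept in the finite control), and can
   then decide "x = 1" and "x * m = 1" by zero tests.

   Strictness: a two-counter automaton accepts a^n exactly when n + 2 is a
   triangular number T(m), m >= 1. If an rtDVA(1) accepted the same words,
   by pigeonhole two accepted words a^(T(a)-2), a^(T(b)-2) with a < b would
   lead to the same state with the same "first entry = 1" bit. Both being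
   accepted, the $-step multiplies both registers by the same nonzero scalar
   to reach 1, so the two configurations coincide; yet appending a^(a+1)
   gives a word of the language after the first and not after the second. *)

Definition qlogn (p : nat) (x : rat) : int :=
  (logn p `|numq x|)%:Z - (logn p `|denq x|)%:Z.

Lemma qlognM p x y : x != 0 -> y != 0 -> qlogn p (x * y) = qlogn p x + qlogn p y.
Proof.
move=> x0 y0.
have xy0 : x * y != 0 by rewrite mulf_neq0.
have E : numq (x * y) * (denq x * denq y) = numq x * numq y * denq (x * y).
  by apply: (@intr_inj rat); rewrite !rmorphM /= !numqE; ring.
have /(congr1 (logn p)) : (`|numq (x * y)| * (`|denq x| * `|denq y|) =
    `|numq x| * `|numq y| * `|denq (x * y)|)%N by rewrite -!abszM E.
rewrite !lognM ?muln_gt0 ?absz_gt0 ?numq_eq0 ?denq_neq0 ?xy0 ?x0 ?y0 //.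
rewrite /qlogn; lia.
Qed.

Lemma qlogn1 p : qlogn p 1 = 0.
Proof. by rewrite /qlogn logn1. Qed.

Lemma qlogn_eq1 x : 0 < x -> (forall p, qlogn p x = 0) -> x = 1.
Proof.
move=> x_gt0 qlogn_x.
have : `|numq x|%N = `|denq x|%N.
  apply: eqn_from_log; rewrite ?absz_gt0 ?numq_eq0 ?denq_neq0 ?gt_eqF //.
  by move=> p; have := qlogn_x p; rewrite /qlogn; lia.
have := denq_gt0 x; rewrite -numq_gt0 in x_gt0 => den_gt0 num_den.
by rewrite -[x]divq_num_den (_ : numq x = denq x) ?divff ?intr_eq0 ?denq_neq0 //; lia.
Qed.

Lemma logn_small p n : (n < p)%N -> logn p n = 0%N.
Proof.
move=> lt_np; apply/eqP; rewrite -leqn0 leqNgt logn_gt0 mem_primes.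
apply/negP => /and3P [_ n_gt0 /dvdn_leq]; move/(_ n_gt0); lia.
Qed.

Definition qsize (x : rat) : nat := (`|numq x| + `|denq x|)%N.

Definition qsmall (N : nat) (x : rat) : Prop := x != 0 ->
  (forall p, (N <= p)%N -> qlogn p x = 0) /\ (forall p, - (N%:Z) <= qlogn p x <= N%:Z).

Lemma qsmall_qsize N x : (qsize x < N)%N -> qsmall N x.
Proof.
rewrite /qsize => size_x x0.
have num_gt0 : (0 < `|numq x|)%N by rewrite absz_gt0 numq_eq0.
have den_gt0 : (0 < `|denq x|)%N by rewrite absz_gt0 denq_neq0.
split=> p.
  by move=> le_Np; rewrite /qlogn !logn_small //; lia.
have := ltn_logl p num_gt0; have := ltn_logl p den_gt0; rewrite /qlogn; lia.
Qed.

Lemma qsmall1 N : qsmall N 1.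
Proof. by move=> _; split=> p; rewrite qlogn1 //; lia. Qed.

Lemma mulr_gt0_sign (R : realDomainType) (x y : R) : x * y != 0 -> (0 < x * y) = ((x < 0) == (y < 0)).
Proof.
move=> xy0; rewrite lt0r xy0 leNgt mulr_lt0.
by move: xy0; rewrite mulf_eq0 negb_or => /andP [-> ->]; case: (x < 0); case: (y < 0).
Qed.

Section BalancedDigits.
Variable N : nat.
Local Notation B := (2 * N).+1.

Definition digit (o : 'I_B) : int := o%:Z - N%:Z.

Definition of_digit (d : int) : 'I_B := inord (absz (d + N%:Z)).

Lemma digit_bound o : - (N%:Z) <= digit o <= N%:Z.
Proof. by have := ltn_ord o; rewrite /digit; lia. Qed.

Lemma of_digitK d : - (N%:Z) <= d <= N%:Z -> digit (of_digit d) = d.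
Proof. by move=> d_bound; rewrite /digit inordK; lia. Qed.

Lemma balanced_eq c d y : - (N%:Z) <= d <= N%:Z -> - (N%:Z) <= y <= N%:Z ->
  (B%:Z * c + d == y) = (c == 0) && (d == y).
Proof.
move=> d_bound y_bound; have [->|c_neq0] := eqVneq c 0; first by rewrite mulr0 add0r.
apply/eqP => eq_y.
have : B%:Z <= `|B%:Z * c| by rewrite normrM ler_peMr ?normr_ge0 //; lia.
rewrite (_ : B%:Z * c = y - d); lia.
Qed.

Definition add_digit (o : 'I_B) (e : int) : 'I_B * incr :=
  let t := digit o + e in
  if t < - (N%:Z) then (of_digit (t + B%:Z), IncM1)
  else if N%:Z < t then (of_digit (t - B%:Z), IncP1) else (of_digit t, Inc0).

Lemma add_digitP o e : - (N%:Z) <= e <= N%:Z ->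
  B%:Z * incr_val (add_digit o e).2 + digit (add_digit o e).1 = digit o + e.
Proof.
have := digit_bound o; rewrite /add_digit => o_bound e_bound.
case: ifP => [t_lt|t_ge]; last case: ifP => [t_gt|t_le]; rewrite /= of_digitK; lia.
Qed.
End BalancedDigits.

Section ValuationCounters.
Variable N : nat.
Local Notation B := (2 * N).+1.
Local Notation digits := {ffun 'I_N -> 'I_B}.
Local Notation counters := {ffun 'I_N -> int}.

(* [z] and [s] record x = 0 and x < 0; for each i < N the valuation at i is
   split as B * (counter i) + (digit i) with a balanced digit kept in the
   finite control, so that "valuation at i = -e" for |e| <= N reduces to a
   zero test of counter i (see [balanced_eq]). *)
Definition encodes (z s : bool) (o : digits) (ctr : counters) (x : rat) : Prop :=
  z = (x == 0) /\ (x != 0 -> [/\ s = (x < 0),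
    forall i : 'I_N, qlogn i x = B%:Z * ctr i + digit (o i) &
    forall p, (N <= p)%N -> qlogn p x = 0]).

Definition inverse_test (z s : bool) (o : digits) (zero : {ffun 'I_N -> bool}) (m : rat) :=
  [&& ~~ z, m != 0, s == (m < 0) & [forall i, zero i && (digit (o i) == - qlogn i m)]].

Lemma inverse_testP z s o ctr x m : encodes z s o ctr x -> qsmall N m ->
  inverse_test z s o [ffun i => ctr i == 0] m = (x * m == 1).
Proof.
move=> [-> enc_x] small_m; rewrite /inverse_test.
have [->|x0] := eqVneq x 0; first by rewrite mul0r.
have [->|m0] := eqVneq m 0; first by rewrite mulr0 /= eq_sym oner_eq0.
have [sign_x qlogn_x high_x] := enc_x x0; have [high_m bound_m] := small_m m0.
have xm0 : x * m != 0 by rewrite mulf_neq0.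
have -> : (x * m == 1) = (0 < x * m) && [forall i : 'I_N, qlogn i (x * m) == 0].
  apply/eqP/andP => [->|[xm_gt0 /forallP low_xm]].
    by split; [exact: ltr01 | apply/forallP => i; rewrite qlogn1].
  apply: qlogn_eq1 => // p; have [lt_pN|le_Np] := ltnP p N.
    exact/eqP/(low_xm (Ordinal lt_pN)).
  by rewrite qlognM // high_x // high_m.
rewrite mulr_gt0_sign // -sign_x /=; congr (_ && _); apply: eq_forallb => i.
rewrite ffunE qlognM // qlogn_x addr_eq0 balanced_eq //; first exact: digit_bound.
by have := bound_m i; lia.
Qed.

Definition mul_digits (o : digits) (m : rat) : digits :=
  [ffun i => (add_digit (o i) (qlogn i m)).1].

Definition mul_carries (o : digits) (m : rat) : {ffun 'I_N -> incr} :=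
  [ffun i => (add_digit (o i) (qlogn i m)).2].

Lemma encodes_mul z s o ctr x m : encodes z s o ctr x -> x != 0 -> qsmall N m -> m != 0 ->
  encodes false (s (+) (m < 0)) (mul_digits o m)
    [ffun i => ctr i + incr_val (mul_carries o m i)] (x * m).
Proof.
move=> [_ enc_x] x0 small_m m0.
have [sign_x qlogn_x high_x] := enc_x x0; have [high_m bound_m] := small_m m0.
have xm0 : x * m != 0 by rewrite mulf_neq0.
split=> [|_]; first by rewrite (negbTE xm0).
split=> [|i|p le_Np].
- by rewrite mulr_lt0 x0 m0 sign_x.
- rewrite !ffunE qlognM // qlogn_x -addrA -add_digitP //; ring.
- by rewrite qlognM // high_x // high_m.
Qed.

Lemma encodes0 s o ctr : encodes true s o ctr 0.
Proof. by split=> //; rewrite eqxx. Qed.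

Lemma encodes_init v : qsmall N v ->
  encodes (v == 0) (v < 0) [ffun i : 'I_N => of_digit N (qlogn i v)] [ffun => 0] v.
Proof.
move=> small_v; split=> // v0; have [high_v bound_v] := small_v v0.
by split=> // i; rewrite !ffunE mulr0 add0r of_digitK.
Qed.
End ValuationCounters.

Lemma mulmx11 (v : 'rV[rat]_1) (A : 'M[rat]_1) : (v *m A) 0 0 = v 0 0 * A 0 0.
Proof. by rewrite mxE big_ord1. Qed.

Section Simulation.
Variables (S : finType) (M : rtDVA S 0).
Local Notation Q := (dva_Q M).
Local Notation delta := (@dva_delta S 0 M).
Local Notation acc := (@dva_acc S 0 M).

(* [esym] alone is ssrfun's symmetry lemma. *)
Definition esym_of (c : option (option S)) : Defs.esym S :=
  match c with Some (Some s) => ESym s | Some None => ECent | None => EDollar end.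

Definition dva_mult (q : Q) (a : Defs.esym S) (b : bool) : rat := (delta q a b).2 0 0.

Definition dva_bound : nat :=
  (maxn (qsize (@dva_v S 0 M 0 0))
    (\max_(t : Q * option (option S) * bool) qsize (dva_mult t.1.1 (esym_of t.1.2) t.2))).+1.
Local Notation N := dva_bound.
Local Notation B := (2 * N).+1.

Lemma qsmall_dva_mult q a b : qsmall N (dva_mult q a b).
Proof.
apply: qsmall_qsize; rewrite ltnS; apply: leq_trans (leq_maxr _ _).
have [c ->] : exists c, a = esym_of c.
  by case: a => [s||]; [exists (Some (Some s)) | exists (Some None) | exists None].
exact: (leq_bigmax (q, c, b)).
Qed.

Lemma qsmall_dva_v : qsmall N (@dva_v S 0 M 0 0).
Proof. by apply: qsmall_qsize; rewrite ltnS leq_maxl. Qed.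

Definition sim_state := (Q * bool * bool * {ffun 'I_N -> 'I_B} * bool)%type.

(* The last component tells whether the simulated DVA would accept if this
   symbol were the end-marker; the DVA's final test "first entry = 1" is thus
   decided before the counters are updated. *)
Definition sim_delta (st : sim_state) (a : Defs.esym S) (zero : {ffun 'I_N -> bool}) :
    sim_state * {ffun 'I_N -> incr} :=
  let: (q, z, s, o, _) := st in
  let: (q', A) := delta q a (inverse_test z s o zero 1) in
  let m := A 0 0 in
  let accepting := (q' \in acc) && inverse_test z s o zero m in
  if z || (m == 0) then ((q', true, s, o, accepting), [ffun => Inc0])
  else ((q', false, s (+) (m < 0), mul_digits o m, accepting), mul_carries o m).

Definition sim_init : sim_state :=
  let v := @dva_v S 0 M 0 0 in
  (@dva_q0 S 0 M, v == 0, v < 0, [ffun i : 'I_N => of_digit N (qlogn i v)],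
   (@dva_q0 S 0 M \in acc) && (v == 1)).

Definition dca_of_dva : rtDCA S N := RtDCA sim_delta sim_init [set st : sim_state | st.2].

Definition sim (c : Q * 'rV[rat]_1) (d : sim_state * {ffun 'I_N -> int}) : Prop :=
  let: (q, v) := c in let: ((q', z, s, o, accepting), ctr) := d in
  [/\ q' = q, encodes z s o ctr (v 0 0) & accepting = (q \in acc) && (v 0 0 == 1)].

Lemma sim_step c d a : sim c d -> sim (dva_step c a) (dca_step (N := dca_of_dva) d a).
Proof.
case: c => q v; case: d => [[[[[_ z] s] o] _] ctr] [-> enc_x _] /=.
set x := v 0 0 in enc_x *.
rewrite (inverse_testP enc_x (qsmall1 N)) mulr1.
case E : (delta q a (x == 1)) => [q' A]; set m := A 0 0.
have small_m : qsmall N m by rewrite /m -[A]/((q', A).2) -E; exact: qsmall_dva_mult.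
rewrite (inverse_testP enc_x small_m) /= mulmx11 -/x -/m.
case: ifP => [zero_xm|nonzero_xm]; split=> //.
- have -> : x * m = 0 by case/orP: zero_xm; rewrite ?enc_x.1 => /eqP ->; rewrite ?mul0r ?mulr0.
  exact: encodes0.
- move: nonzero_xm => /negbT; rewrite negb_or enc_x.1 => /andP [x0 m0].
  exact: (encodes_mul enc_x x0 small_m m0).
Qed.

Lemma sim_foldl l c d : sim c d ->
  sim (foldl (@dva_step S 0 M) c l) (foldl (@dca_step S N dca_of_dva) d l).
Proof. by elim: l c d => [|a l IH] c d //= sim_cd; apply/IH/sim_step. Qed.

Lemma sim_init_ok : sim (@dva_q0 S 0 M, @dva_v S 0 M) (sim_init, [ffun => 0]).
Proof. by split=> //; apply: encodes_init; exact: qsmall_dva_v. Qed.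

Lemma dca_of_dvaP w : dva_accepts M w = dca_accepts dca_of_dva w.
Proof.
rewrite /dva_accepts /dca_accepts.
have := sim_foldl (tape w) sim_init_ok.
case: (foldl _ _ _) => q v; case: (foldl _ _ _) => [[[[[q' z] s] o] accepting] ctr].
by case=> _ _ -> /=; rewrite inE.
Qed.
End Simulation.

Section Indistinguishability.
Variables (S : finType) (M : rtDVA S 0).
Local Notation conf := (dva_Q M * 'rV[rat]_1)%type.

Definition dva_conf (u : seq S) : conf :=
  foldl (@dva_step S 0 M) (@dva_q0 S 0 M, @dva_v S 0 M) (ECent :: map (@ESym S) u).

Definition dva_final (c : conf) : bool :=
  let: (q, v) := dva_step c EDollar in (q \in @dva_acc S 0 M) && (v 0 0 == 1).

Definition dva_observe (c : conf) : dva_Q M * bool := (c.1, c.2 0 0 == 1).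

Lemma dva_acceptsE w : dva_accepts M w = dva_final (dva_conf w).
Proof. by rewrite /dva_accepts /dva_final /= foldl_cat /=; case: dva_step. Qed.

Lemma dva_conf_cat u v :
  dva_conf (u ++ v) = foldl (@dva_step S 0 M) (dva_conf u) (map (@ESym S) v).
Proof. by rewrite /dva_conf map_cat /= foldl_cat. Qed.

Lemma dva_final_inj c c' : dva_final c -> dva_final c' ->
  dva_observe c = dva_observe c' -> c = c'.
Proof.
move: c c' => [q v] [q' v'] fin fin' [/= eq_q eq_bit]; subst q'; move: fin fin'.
rewrite /dva_final /dva_step /= -eq_bit; case: dva_delta => q' A.
rewrite !mulmx11 => /andP [_ /eqP vA1] /andP [_ /eqP v'A1].
have A0 : A 0 0 != 0 by apply: contra_eq_neq vA1 => ->; rewrite mulr0.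
have eq_v : v 0 0 = v' 0 0 by apply: (mulIf A0); rewrite vA1 v'A1.
by congr (_, _); apply/matrixP => i j; rewrite !ord1.
Qed.

Lemma dva_accepts_cat_observe u u' v : dva_accepts M u -> dva_accepts M u' ->
  dva_observe (dva_conf u) = dva_observe (dva_conf u') ->
  dva_accepts M (u ++ v) = dva_accepts M (u' ++ v).
Proof.
rewrite !dva_acceptsE => acc_u acc_u' obs.
by rewrite !dva_conf_cat (dva_final_inj acc_u acc_u' obs).
Qed.
End Indistinguishability.

Fixpoint tri (m : nat) : nat := if m is m'.+1 then (tri m' + m'.+1)%N else 0%N.

Lemma leq_tri m : (m <= tri m)%N.
Proof. by elim: m => [|m IH] //=; lia. Qed.

Definition active (b : bool) : 'I_2 := if b then ord_max else ord0.

Lemma active_negb b (i : 'I_2) : (i == active (~~ b)) = (i != active b).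
Proof. by case: b; case: i => [[|[|]]]. Qed.

Definition tri_delta (st : bool * bool) (a : Defs.esym unit) (zero : {ffun 'I_2 -> bool}) :
    (bool * bool) * {ffun 'I_2 -> incr} :=
  let ph := st.1 in
  if zero (active ph) then ((~~ ph, true), [ffun i => if i == active ph then Inc0 else IncP1])
  else ((ph, false), [ffun i => if i == active ph then IncM1 else IncP1]).

Definition tri_dca : rtDCA unit 2 := RtDCA tri_delta (false, false) [set st | st.2].

(* In round m the active counter runs down from m to 0 while the other runs
   up from 0 to m; then they swap roles, so round m ends at step tri m. *)
Definition tri_conf (m j : nat) : (bool * bool) * {ffun 'I_2 -> int} :=
  ((odd m, (j == 0)%N && (0 < m)%N),
   [ffun i => if i == active (odd m) then (m - j)%:Z else j%:Z]).

Definition tri_step c := dca_step (N := tri_dca) c ECent.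

Lemma dca_step_tri c a : dca_step (N := tri_dca) c a = tri_step c.
Proof. by case: c. Qed.

Lemma tri_step_round m j : (j < m)%N -> tri_step (tri_conf m j) = tri_conf m j.+1.
Proof.
move=> lt_jm; rewrite /tri_step /tri_conf /dca_step /= /tri_delta /= !ffunE eqxx.
have -> : ((m - j)%:Z == 0) = false by apply/eqP; lia.
congr (_, _); apply/ffunP => i; rewrite !ffunE.
by case: (i == active (odd m)) => /=; lia.
Qed.

Lemma tri_step_next m : tri_step (tri_conf m m) = tri_conf m.+1 0.
Proof.
rewrite /tri_step /tri_conf /dca_step /= /tri_delta /= !ffunE eqxx.
have -> : ((m - m)%:Z == 0) = true by apply/eqP; lia.
congr (_, _); apply/ffunP => i; rewrite !ffunE active_negb.
by case: (i == active (odd m)) => /=; lia.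
Qed.

Lemma iter_tri_round m j : (j <= m)%N -> iter j tri_step (tri_conf m 0) = tri_conf m j.
Proof.
by elim: j => [|j IH] le_jm //=; rewrite IH ?tri_step_round //; lia.
Qed.

Lemma iter_tri m j : (j <= m)%N -> iter (tri m + j) tri_step (tri_conf 0 0) = tri_conf m j.
Proof.
move=> le_jm; rewrite addnC iterD -(iter_tri_round le_jm); congr iter.
elim: m {j le_jm} => [|m IH] //=.
by rewrite addnS iterS addnC iterD IH iter_tri_round ?tri_step_next.
Qed.

Lemma tri_dca_accepts m j : (j <= m)%N -> (2 <= tri m + j)%N ->
  dca_accepts tri_dca (nseq (tri m + j - 2) tt) = (j == 0)%N.
Proof.
move=> le_jm ge2; rewrite /dca_accepts.
have -> : forall l c, foldl (@dca_step _ _ tri_dca) c l = iter (size l) tri_step c.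
  by elim=> [|a l IH] c //=; rewrite IH dca_step_tri -iterSr.
have -> : (false, false, [ffun=> 0]) = tri_conf 0 0.
  by congr (_, _); apply/ffunP => i; rewrite !ffunE; case: ifP.
rewrite /tape /= -iterS size_cat size_map size_nseq addn1.
rewrite (_ : (_ - 2).+2 = tri m + j)%N; last by lia.
rewrite iter_tri // inE /=; case: m le_jm ge2 => [|m] /=; [lia | by rewrite andbT].
Qed.

Lemma tri_dca_not_dva (M : rtDVA unit 0) :
  ~ (forall w, dva_accepts M w = dca_accepts tri_dca w).
Proof.
move=> agree.
pose word n := nseq n tt.
have acc_tri a : (2 <= a)%N -> dva_accepts M (word (tri a - 2)%N).
  by move=> ge2; rewrite agree -[tri a]addn0 tri_dca_accepts //; have := leq_tri a; lia.
have acc_next a : (2 <= a)%N -> dva_accepts M (word (tri a - 2)%N ++ word a.+1).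
  move=> ge2; rewrite /word -nseqD agree (_ : (_ + _ = tri a.+1 + 0 - 2)%N).
    by rewrite tri_dca_accepts //=; lia.
  by have := leq_tri a; rewrite /=; lia.
have rej_later a b : (2 <= a)%N -> (a < b)%N ->
    ~~ dva_accepts M (word (tri b - 2)%N ++ word a.+1).
  move=> ge2 lt_ab; rewrite /word -nseqD agree (_ : (_ + _ = tri b + a.+1 - 2)%N).
    by rewrite tri_dca_accepts //; have := leq_tri b; lia.
  by have := leq_tri b; lia.
pose K := #|{: dva_Q M * bool}|.+1.
pose obs (i : 'I_K) := dva_observe (dva_conf M (word (tri (i + 2) - 2)%N)).
have /injectivePn [i [j neq_ij obs_ij]] : ~~ injectiveb obs.
  by apply/injectiveP => /leq_card; rewrite card_ord ltnn.
wlog lt_ij : i j neq_ij obs_ij / (i < j)%N.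
  move=> gen; case: (ltngtP i j) => [|gt_ij|eq_ij]; first exact: gen.
    by apply: (gen j i); rewrite 1?eq_sym.
  by move: neq_ij; rewrite (val_inj eq_ij) eqxx.
have := dva_accepts_cat_observe (word (i + 2).+1) (acc_tri _ (leq_addl _ _))
  (acc_tri _ (leq_addl _ _)) obs_ij.
rewrite acc_next ?leq_addl // => /esym; apply/negP/rej_later; lia.
Qed.

Theorem theorem5 :
  (forall (S : finType) (M : rtDVA S 0),
      exists k : nat, (0 < k)%N /\
        exists N : rtDCA S k, forall w : seq S, dva_accepts M w = dca_accepts N w)
  /\
  (exists (S : finType) (k : nat), (0 < k)%N /\
      exists N : rtDCA S k,
        forall M : rtDVA S 0, exists w : seq S, dva_accepts M w <> dca_accepts N w).
Proof.
split.
- move=> S M; exists (dva_bound M); split=> //.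
  by exists (dca_of_dva M); exact: dca_of_dvaP.
- exists unit, 2%N; split=> //; exists tri_dca => M.
  by apply: not_all_ex_not; exact: tri_dca_not_dva.
Qed.
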